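(* For every $n\ge 3$, the cycle $C_n$ on $n$ vertices satisfies $$\mathrm{vol}(C_n)=1-\frac{2^{n-1}}{n!}.$$
   Context: For a finite simple undirected graph $G=(V,E)$ with $V=[n]$, and $S\subseteq[n-1]$, the cut vector $x^S\in\mathbb{R}^{|E|}$ has coordinates $x^S_{ij}=1$ if $|\{i,j\}\cap S|=1$ and $x^S_{ij}=0$ otherwise, for each edge $(i,j)\in E$. The cut polytope is $\mathrm{Cut}(G)=\mathrm{conv}\{x^S: S\subseteq[n-1]\}\subset\mathbb{R}^{|E|}$, and $\mathrm{vol}(G)$ denotes the $|E|$-dimensional Lebesgue volume of $\mathrm{Cut}(G)$. *)

From HB Require Import structures.
From mathcomp Require Import all_boot all_order all_algebra.
From mathcomp Require Import all_classical all_reals all_analysis.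
Set Implicit Arguments. Unset Strict Implicit. Unset Printing Implicit Defensive.
Import Order.TTheory GRing.Theory Num.Theory.
Local Open Scope classical_set_scope.
Local Open Scope ring_scope.

Definition vcons (R : Type) (m : nat) (x : R) (y : 'I_m -> R) : 'I_m.+1 -> R :=
  fun i => if unlift ord0 i is Some j then y j else x.

(* m-dimensional Lebesgue volume, as the iterated Lebesgue integral of
   the indicator (Tonelli): vol_0 A = 1 if A contains the point of R^0,
   vol_{m+1} A = \int_R vol_m {y | (x,y) \in A} dx. *)
Fixpoint lebesgue_vol (R : realType) (m : nat) : set ('I_m -> R) -> \bar R :=
  match m with
  | 0 => fun A => if `[< exists f, A f >] then 1%E else 0%E
  | m'.+1 => fun A : set ('I_m'.+1 -> R) =>
      (\int[@lebesgue_measure R]_(x in [set: R])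
         @lebesgue_vol R m' [set y | A (@vcons R m' x y)])%E
  end.

(* A graph on vertex set 'I_n (i.e. [n]) with m edges, edge k having
   endpoints (ends k).1 and (ends k).2. *)
Definition cut_vector (R : nzRingType) (n m : nat) (ends : 'I_m -> 'I_n * 'I_n)
  (S : {set 'I_n}) : 'I_m -> R :=
  fun k => if ((ends k).1 \in S) (+) ((ends k).2 \in S) then 1 else 0.

(* Cut polytope: convex hull of cut vectors x^S with S a subset of [n-1],
   i.e. S not containing the last vertex (index n-1). *)
Definition cut_polytope (R : realType) (n m : nat) (ends : 'I_m -> 'I_n * 'I_n)
  : set ('I_m -> R) :=
  [set x : 'I_m -> R | exists lam : {set 'I_n} -> R,
     [/\ (forall S : {set 'I_n}, 0 <= lam S),
         (forall S : {set 'I_n}, (forall v : 'I_n, val v = n.-1 -> v \in S) -> lam S = 0),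
         \sum_(S : {set 'I_n}) lam S = 1 &
         forall k, x k = \sum_(S : {set 'I_n}) lam S * @cut_vector R n m ends S k]].

Definition cut_vol (R : realType) (n m : nat) (ends : 'I_m -> 'I_n * 'I_n) : \bar R :=
  @lebesgue_vol R m (@cut_polytope R n m ends).

Definition cycle_ends (n : nat) : 'I_n -> 'I_n * 'I_n :=
  fun k => (k, ordS k).

(* Let Q_m(r, s) ([parity_region r s]) be the set of points of the cube [0,1]^m
   at l1-distance at least r from every odd vertex and at least s from every
   even vertex (a vertex being the indicator vector of a subset of [m]).
   The cut vectors of C_n are exactly the indicator vectors of the even edge
   sets, and Cut(C_n) = Q_n(1, 0).  The inclusion into Q_n(1, 0) holds because
   the distances from a point of the cube to an odd and to an even vertex add
   up to at least 1.  Conversely, a point of Q_m(1 - p, p) is the vector of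
   marginals of a probability distribution on the subsets of [m] that gives
   mass p to the odd sets: such a distribution is built one coordinate at a
   time, the odd mass q of the remaining coordinates being chosen between
   finitely many lower and upper bounds.
   The slice of Q_(m+1)(r, s) at first coordinate x is
   Q_m(max(r - x, s - 1 + x), max(s - x, r - 1 + x)), so integrating over x
   proves, for r, s, r + s <= 1,
     vol Q_m(r, s) = 1 - 2^(m-1)/m! (r_+^m + s_+^m),
   and r = 1, s = 0 gives the theorem. *)

From HB Require Import structures.
From mathcomp Require Import all_boot all_order all_algebra.
From mathcomp Require Import all_classical all_reals all_analysis.
From mathcomp Require Import ring lra zify.
Set Implicit Arguments. Unset Strict Implicit. Unset Printing Implicit Defensive.
Import Order.TTheory GRing.Theory Num.Theory.
Import numFieldNormedType.Exports.
Local Open Scope classical_set_scope.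
Local Open Scope ring_scope.

Lemma card_sum_mem (T : finType) (A : {set T}) : #|A| = (\sum_i (i \in A))%N.
Proof. by rewrite -sum1_card big_mkcond; apply: eq_bigr => i _; case: (i \in A). Qed.

Lemma divr_ge0_le1 (R : realFieldType) (c w : R) : 0 <= c <= w -> 0 <= c / w <= 1.
Proof.
case/andP=> c0 cw; have [->|w0] := eqVneq w 0; first by rewrite invr0 mulr0 lexx ler01.
have w_gt0 : 0 < w by rewrite lt_neqAle eq_sym w0 (le_trans c0).
by rewrite divr_ge0 ?(ltW w_gt0) //= ler_pdivrMr // mul1r.
Qed.

Lemma mulr_divr_le (R : realFieldType) (c w : R) : 0 <= c <= w -> w * (c / w) = c.
Proof.
case/andP=> c0 cw; have [w0|w0] := eqVneq w 0; last by rewrite mulrC divfK.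
by rewrite w0 mul0r; apply/eqP; rewrite eq_le c0 -w0 cw.
Qed.

Section SetCons.
Variable m : nat.
Implicit Types (b : bool) (v : {set 'I_m}) (w : {set 'I_m.+1}).

Definition setcons b v : {set 'I_m.+1} :=
  [set i | if unlift ord0 i is Some j then j \in v else b].

Definition setbehead w : {set 'I_m} := [set j | lift ord0 j \in w].

Lemma setcons0 b v : (ord0 \in setcons b v) = b.
Proof. by rewrite inE unlift_none. Qed.

Lemma setconsS b v j : (lift ord0 j \in setcons b v) = (j \in v).
Proof. by rewrite inE liftK. Qed.

Lemma setbeheadK w : setcons (ord0 \in w) (setbehead w) = w.
Proof. by apply/setP => i; rewrite inE; case: unliftP => [j ->|->]; rewrite ?inE. Qed.

Lemma setconsK b v : setbehead (setcons b v) = v.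
Proof. by apply/setP => j; rewrite inE setconsS. Qed.

Lemma odd_setcons b v : odd #|setcons b v| = b (+) odd #|v|.
Proof.
rewrite !card_sum_mem big_ord_recl setcons0 oddD; congr (_ (+) odd _).
  by case: b.
by apply: eq_bigr => j _; rewrite setconsS.
Qed.

Lemma big_setcons (R : Type) (idx : R) (op : Monoid.com_law idx)
    (F : {set 'I_m.+1} -> R) :
  \big[op/idx]_w F w = \big[op/idx]_b \big[op/idx]_v F (setcons b v).
Proof.
rewrite (reindex (fun p : bool * {set 'I_m} => setcons p.1 p.2)) /=.
  by rewrite pair_big.
exists (fun w => (ord0 \in w, setbehead w)) => [[b v] _|w _] /=.
  by rewrite setcons0 setconsK.
by rewrite setbeheadK.
Qed.

End SetCons.

Lemma vcons0 (R : Type) m (t : R) (z : 'I_m -> R) : vcons t z ord0 = t.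
Proof. by rewrite /vcons unlift_none. Qed.

Lemma vconsS (R : Type) m (t : R) (z : 'I_m -> R) j : vcons t z (lift ord0 j) = z j.
Proof. by rewrite /vcons liftK. Qed.

Lemma vcons_eta (R : Type) m (y : 'I_m.+1 -> R) :
  vcons (y ord0) (fun j => y (lift ord0 j)) = y.
Proof. by apply/funext => i; rewrite /vcons; case: unliftP => [j ->|->]. Qed.

Section VertexDistance.
Variables (R : realFieldType) (m : nat).
Implicit Types (v w : {set 'I_m}) (y : 'I_m -> R).

Definition unit_cube : set ('I_m -> R) := [set y | forall k, 0 <= y k <= 1].

Definition vertex v : 'I_m -> R := fun k => (k \in v)%:R.

Definition vertex_dist v y : R := \sum_k (if k \in v then 1 - y k else y k).

Lemma vertex_in_unit_cube v : unit_cube (vertex v).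
Proof. by move=> k; rewrite /vertex; case: (k \in v); rewrite /= ?lexx ?ler01. Qed.

Lemma vertex_distxx v : vertex_dist v (vertex v) = 0.
Proof. by apply: big1 => k _; rewrite /vertex; case: (k \in v); rewrite ?subrr. Qed.

Lemma vertex_dist_ge0 v y : unit_cube y -> 0 <= vertex_dist v y.
Proof.
move=> y01; apply: sumr_ge0 => k _; have /andP[y0 y1] := y01 k.
by case: (k \in v); rewrite ?subr_ge0.
Qed.

Lemma vertex_dist_odd_even v w y : unit_cube y ->
  odd #|v| -> ~~ odd #|w| -> 1 <= vertex_dist v y + vertex_dist w y.
Proof.
move=> y01 ov ew; have [k vk_wk] : exists k, (k \in v) != (k \in w).
  apply/existsP; apply: contraNT ew => /existsPn vw.
  by rewrite (_ : w = v) //; apply/setP => k; have /negPn/eqP := vw k.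
rewrite /vertex_dist -big_split (bigD1 k) //=.
have -> : (if k \in v then 1 - y k else y k) + (if k \in w then 1 - y k else y k) = 1.
  by move: vk_wk; case: (k \in v); case: (k \in w); rewrite //= ?subrK // addrC subrK.
rewrite lerDl; apply: sumr_ge0 => i _; have /andP[y0 y1] := y01 i.
by case: (i \in v); case: (i \in w); rewrite addr_ge0 ?subr_ge0.
Qed.

Lemma vertex_dist_affine (T : finType) (lam : T -> R) (f : T -> 'I_m -> R) v :
  \sum_i lam i = 1 ->
  vertex_dist v (fun k => \sum_i lam i * f i k) = \sum_i lam i * vertex_dist v (f i).
Proof.
move=> lam1; under [RHS]eq_bigr do rewrite mulr_sumr.
rewrite exchange_big; apply: eq_bigr => k _; case: (k \in v) => //.
by rewrite -{1}lam1 -sumrB; apply: eq_bigr => i _; rewrite mulrBr mulr1.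
Qed.

Lemma unit_cube_convex (T : finType) (lam : T -> R) (f : T -> 'I_m -> R) :
  (forall i, 0 <= lam i) -> \sum_i lam i = 1 -> (forall i, unit_cube (f i)) ->
  unit_cube (fun k => \sum_i lam i * f i k).
Proof.
move=> lam0 lam1 f01 k; apply/andP; split.
  by apply: sumr_ge0 => i _; have /andP[? _] := f01 i k; exact: mulr_ge0.
rewrite -lam1; apply: ler_sum => i _; have /andP[_ ?] := f01 i k.
by rewrite ler_piMr.
Qed.

End VertexDistance.

Lemma vertex_dist_setcons (R : realFieldType) m b (v : {set 'I_m}) t (z : 'I_m -> R) :
  vertex_dist (setcons b v) (vcons t z) = (if b then 1 - t else t) + vertex_dist v z.
Proof.
rewrite /vertex_dist big_ord_recl setcons0 vcons0.
by under eq_bigr do rewrite setconsS vconsS.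
Qed.

Definition parity_region (R : realFieldType) m (r s : R) : set ('I_m -> R) :=
  [set y | [/\ unit_cube y, forall v : {set 'I_m}, odd #|v| -> r <= vertex_dist v y
             & forall v : {set 'I_m}, ~~ odd #|v| -> s <= vertex_dist v y]].

Lemma parity_region_vcons (R : realFieldType) m (r s t : R) (z : 'I_m -> R) :
  parity_region r s (vcons t z) <->
  0 <= t <= 1 /\ parity_region (Num.max (r - t) (s - 1 + t)) (Num.max (s - t) (r - 1 + t)) z.
Proof.
split.
- case=> cube odd_r even_s; have t01 : 0 <= t <= 1 by have := cube ord0; rewrite vcons0.
  split=> //; split => [j|v ov|v ev]; first by have := cube (lift ord0 j); rewrite vconsS.
  + have := odd_r (setcons false v); have := even_s (setcons true v).
    rewrite !odd_setcons !vertex_dist_setcons /= ov => /(_ isT) h1 /(_ isT) h2.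
    by rewrite ge_max; apply/andP; split; lra.
  + have := even_s (setcons false v); have := odd_r (setcons true v).
    rewrite !odd_setcons !vertex_dist_setcons /= ev => /(_ isT) h1 /(_ isT) h2.
    by rewrite ge_max; apply/andP; split; lra.
- case=> /andP[t0 t1] [cube odd_r even_s]; split.
  + move=> i; case: (unliftP ord0 i) => [j ->|->]; first by rewrite vconsS.
    by rewrite vcons0 t0 t1.
  + move=> w; rewrite -(setbeheadK w) odd_setcons vertex_dist_setcons.
    case: (ord0 \in w) => /= [/even_s|/odd_r]; rewrite ge_max => /andP[]; lra.
  + move=> w; rewrite -(setbeheadK w) odd_setcons vertex_dist_setcons.
    case: (ord0 \in w) => /= [/negPn/odd_r|/even_s]; rewrite ge_max => /andP[]; lra.
Qed.

Lemma parity_region0 (R : realFieldType) (r s : R) (y : 'I_0 -> R) :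
  parity_region r s y <-> s <= 0.
Proof.
have all_set0 (v : {set 'I_0}) : v = finset.set0 by apply/setP => -[].
have dist0 (v : {set 'I_0}) : vertex_dist v y = 0 by rewrite /vertex_dist big_ord0.
split=> [[_ _ /(_ finset.set0)]|s_le0]; first by rewrite cards0 dist0; apply.
by split=> [[]//|v|v]; rewrite (all_set0 v) cards0 dist0.
Qed.

Section Distribution.
Variables (R : realFieldType) (m : nat).
Implicit Types (v : {set 'I_m}) (lam : {set 'I_m} -> R).

Definition is_distribution lam := (forall v, 0 <= lam v) /\ \sum_v lam v = 1.

Definition marginal lam : 'I_m -> R := fun k => \sum_v lam v * vertex R v k.

Definition odd_mass lam : R := \sum_v lam v * (odd #|v|)%:R.

Lemma sum_parity lam (h : bool -> R) : \sum_v lam v = 1 ->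
  \sum_v lam v * h (odd #|v|) = h true * odd_mass lam + h false * (1 - odd_mass lam).
Proof.
move=> lam1; rewrite -lam1 /odd_mass -sumrB !mulr_sumr -big_split /=.
by apply: eq_bigr => v _; case: (odd #|v|); rewrite /= ?mulr1 ?mulr0 ?subr0 ?subrr; ring.
Qed.

Lemma odd_mass_eq0 lam v : is_distribution lam -> odd_mass lam = 0 -> odd #|v| -> lam v = 0.
Proof.
move=> [lam0 _] /psumr_eq0P lam_odd v_odd.
have := lam_odd (fun u _ => mulr_ge0 (lam0 u) (ler0n _ _)) v isT.
by rewrite v_odd mulr1.
Qed.

End Distribution.

Section Glue.
Variables (R : realFieldType) (m : nat) (kappa : bool -> R) (lam : {set 'I_m} -> R).

(* The new first coordinate is set with probability [kappa pi], where [pi] is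
   the parity of the old set. *)
Definition glue : {set 'I_m.+1} -> R := fun w =>
  let v := setbehead w in
  lam v * (if ord0 \in w then kappa (odd #|v|) else 1 - kappa (odd #|v|)).

Lemma glue_setcons b v :
  glue (setcons b v) = lam v * (if b then kappa (odd #|v|) else 1 - kappa (odd #|v|)).
Proof. by rewrite /glue setconsK setcons0. Qed.

Lemma sum_glue_setcons v : \sum_b glue (setcons b v) = lam v.
Proof. by rewrite big_bool /= !glue_setcons -mulrDr addrC subrK mulr1. Qed.

Lemma glue_distribution : (forall pi, 0 <= kappa pi <= 1) ->
  is_distribution lam -> is_distribution glue.
Proof.
move=> kappa01 [lam0 lam1]; split; last first.
  by rewrite big_setcons exchange_big -lam1; apply: eq_bigr => v _; exact: sum_glue_setcons.
move=> w; rewrite -(setbeheadK w) glue_setcons; apply: mulr_ge0 => //.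
by have /andP[] := kappa01 (odd #|setbehead w|); case: (ord0 \in w); rewrite ?subr_ge0.
Qed.

Lemma marginal_glueS j : marginal glue (lift ord0 j) = marginal lam j.
Proof.
rewrite /marginal big_setcons exchange_big; apply: eq_bigr => v _.
by rewrite -sum_glue_setcons mulr_suml; apply: eq_bigr => b _; rewrite /vertex setconsS.
Qed.

Lemma marginal_glue0 : marginal glue ord0 = \sum_v lam v * kappa (odd #|v|).
Proof.
rewrite /marginal big_setcons big_bool /= /vertex.
under eq_bigr do rewrite setcons0 mulr1 glue_setcons.
by under [X in _ + X]eq_bigr do rewrite setcons0 mulr0; rewrite big1_eq addr0.
Qed.

Lemma odd_mass_glue : odd_mass glue =
  \sum_v lam v * (if odd #|v| then 1 - kappa true else kappa false).
Proof.
rewrite /odd_mass big_setcons big_bool -big_split; apply: eq_bigr => v _ /=.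
rewrite !glue_setcons !odd_setcons; case: (odd #|v|) => /=; ring.
Qed.

End Glue.

(* [(t + q - p) / 2] and [(t - q + p) / 2] are the joint probabilities that the
   new coordinate is set and the old set is odd, resp. even: they are forced by
   the marginal [t] and the odd mass [p].  If [q] is 0 or 1, [kappa] divides by
   0 on a parity class of mass 0, which is harmless. *)
Lemma distribution_vcons (R : realFieldType) m (lam : {set 'I_m} -> R) (t p : R) :
  is_distribution lam ->
  let q := odd_mass lam in `|t - p| <= q -> q <= t + p -> t + p + q <= 2 ->
  exists lam', [/\ is_distribution lam', marginal lam' =1 vcons t (marginal lam)
                 & odd_mass lam' = p].
Proof.
move=> [lam0 lam1] q; rewrite ler_norml => /andP[tp_q pt_q] q_tp tpq2.
pose kappa pi := if pi then (t + q - p) / 2 / q else (t - q + p) / 2 / (1 - q).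
have cT : 0 <= (t + q - p) / 2 <= q by apply/andP; split; lra.
have cF : 0 <= (t - q + p) / 2 <= 1 - q by apply/andP; split; lra.
have kappa01 pi : 0 <= kappa pi <= 1 by case: pi; apply: divr_ge0_le1.
exists (glue kappa lam); split.
- exact: glue_distribution.
- move=> i; case: (unliftP ord0 i) => [j ->|->]; first by rewrite marginal_glueS vconsS.
  rewrite marginal_glue0 vcons0 (sum_parity kappa lam1) /kappa /=.
  rewrite [_ / _ * q]mulrC [_ / _ * (1 - q)]mulrC.
  by rewrite (mulr_divr_le cT) (mulr_divr_le cF); lra.
- rewrite odd_mass_glue (sum_parity (fun pi => if pi then _ else _) lam1) /= /kappa /=.
  rewrite mulrBl mul1r [_ / _ * q]mulrC [_ / _ * (1 - q)]mulrC.
  by rewrite (mulr_divr_le cT) (mulr_divr_le cF) -/q; lra.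
Qed.

Lemma parity_region_tail_mass (R : realFieldType) m (t p : R) (z : 'I_m -> R) :
  0 <= p <= 1 -> parity_region (1 - p) p (vcons t z) ->
  exists q, [/\ `|t - p| <= q, q <= t + p, t + p + q <= 2 & parity_region (1 - q) q z].
Proof.
move=> /andP[p0 p1] /parity_region_vcons [/andP[t0 t1] [cube odd_r even_s]].
(* the least odd mass compatible with the constraints inherited from [vcons t z] *)
pose q := \big[Num.max/`|t - p|]_(v : {set 'I_m} | odd #|v|) (1 - vertex_dist v z).
have q_le (x : R) : `|t - p| <= x ->
    (forall v : {set 'I_m}, odd #|v| -> 1 - vertex_dist v z <= x) -> q <= x.
  by move=> ? ?; exact: bigmax_le.
have odd_dist (v : {set 'I_m}) :
    odd #|v| -> 1 - p - t <= vertex_dist v z /\ t + p - 1 <= vertex_dist v z.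
  by move/odd_r; rewrite ge_max => /andP[? ?]; split; lra.
exists q; split.
- exact: bigmax_ge_id.
- apply: q_le => [|v /odd_dist [? ?]]; last lra.
  by rewrite ler_norml; apply/andP; split; lra.
- suff : q <= 2 - (t + p) by lra.
  apply: q_le => [|v /odd_dist [? ?]]; last lra.
  by rewrite ler_norml; apply/andP; split; lra.
- split=> // [v ov|w ew].
    suff : 1 - vertex_dist v z <= q by lra.
    exact: le_bigmax_cond.
  apply: q_le => [|v ov]; last by have := vertex_dist_odd_even cube ov ew; lra.
  by have := even_s w ew; rewrite ge_max ler_norml => /andP[? ?]; apply/andP; split; lra.
Qed.

Theorem parity_region_coupling (R : realFieldType) m (y : 'I_m -> R) (p : R) :
  0 <= p <= 1 -> parity_region (1 - p) p y ->
  exists lam, [/\ is_distribution lam, marginal lam =1 y & odd_mass lam = p].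
Proof.
elim: m y p => [|m IH] y p p01 y_region.
  have p0 : p = 0.
    case: y_region => _ _ /(_ finset.set0); rewrite cards0 /vertex_dist big_ord0 => /(_ isT) ?.
    by apply/eqP; rewrite eq_le; case/andP: p01 => -> _; rewrite andbT.
  exists (fun v => (v == finset.set0)%:R); split => [|[]//|].
  - split=> [v|]; first by case: (v == finset.set0).
    by rewrite (bigD1 finset.set0) //= eqxx big1 ?addr0 // => v /negbTE ->.
  - by rewrite p0; apply: big1 => v _; case: eqP => [->|]; rewrite ?cards0 ?mulr0 ?mul0r.
pose t := y ord0; pose z j := y (lift ord0 j).
have yE : y = vcons t z by rewrite vcons_eta.
rewrite yE in y_region.
have [q [tp_q q_tp tpq2 z_region]] := parity_region_tail_mass p01 y_region.
have q01 : 0 <= q <= 1.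
  by move: tp_q; rewrite ler_norml => /andP[? ?]; apply/andP; split; lra.
have [lam [lam_dist lam_marg lam_odd]] := IH _ _ q01 z_region.
have := distribution_vcons (t := t) (p := p) lam_dist; rewrite lam_odd => /(_ tp_q q_tp tpq2).
case=> lam' [lam'_dist lam'_marg lam'_odd]; exists lam'; split=> // i.
by rewrite lam'_marg yE /vcons; case: unlift.
Qed.

Section CycleCuts.
Variable n : nat.
Implicit Types S T : {set 'I_n}.

Definition cycle_cut S : {set 'I_n} := [set k | (k \in S) (+) (ordS k \in S)].

Lemma cut_vector_cycle (R : realFieldType) S :
  cut_vector R (@cycle_ends n) S = vertex R (cycle_cut S).
Proof. by apply/funext => k; rewrite /cut_vector /vertex inE; case: (_ (+) _). Qed.

Lemma cycle_cut_even S : ~~ odd #|cycle_cut S|.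
Proof.
have shift : (\sum_k (k \in S) = \sum_k (ordS k \in S))%N.
  exact: (reindex_inj (@ordS_inj n)).
have : (#|cycle_cut S| + (\sum_k ((k \in S) && (ordS k \in S))).*2 =
        \sum_k (k \in S) + \sum_k (ordS k \in S))%N.
  rewrite card_sum_mem -addnn -!big_split /=; apply: eq_bigr => k _.
  by rewrite inE; case: (k \in S); case: (ordS k \in S).
by rewrite -shift addnn => /(congr1 odd); rewrite oddD !odd_double addbF => ->.
Qed.

Definition tail_count T (j : nat) : nat := \sum_(i < n | (j <= i < n.-1)%N) (i \in T).

Definition cut_shore T : {set 'I_n} := [set j : 'I_n | odd (tail_count T j)].

Lemma tail_count_step T (k : 'I_n) :
  (k < n.-1)%N -> tail_count T k = ((k \in T) + tail_count T k.+1)%N.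
Proof.
move=> k_lt; rewrite /tail_count (bigD1 k) /= ?leqnn ?k_lt //.
by congr (_ + _)%N; apply: eq_bigl => i; rewrite -val_eqE /=; have := ltn_ord i; lia.
Qed.

Lemma tail_count_last T (k : 'I_n) : val k = n.-1 -> tail_count T k = 0%N.
Proof. by move=> kE; rewrite /tail_count big_pred0 // => i; rewrite kE ltnNge andbN. Qed.

Lemma odd_card_tail_count T (k : 'I_n) : val k = n.-1 ->
  odd #|T| = odd (tail_count T 0) (+) (k \in T).
Proof.
move=> kE; rewrite card_sum_mem (bigD1 k) //= oddD addbC; congr (odd _ (+) _).
  by apply: eq_bigl => i; rewrite -val_eqE /= kE; have := ltn_ord i; lia.
by case: (k \in T).
Qed.

Lemma cut_shore_last T (k : 'I_n) : val k = n.-1 -> k \notin cut_shore T.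
Proof. by move=> kE; rewrite inE tail_count_last. Qed.

Lemma cycle_cut_shore T : ~~ odd #|T| -> cycle_cut (cut_shore T) = T.
Proof.
move=> T_even; apply/setP => k; rewrite !inE.
have [k_lt|k_ge] := ltnP k n.-1.
  have -> : nat_of_ord (ordS k) = k.+1 by rewrite /= modn_small // -ltn_predRL.
  by rewrite tail_count_step // oddD addbK; case: (k \in T).
have kE : nat_of_ord k = n.-1 by have := ltn_ord k; lia.
have -> : nat_of_ord (ordS k) = 0%N.
  by rewrite /= kE prednK ?modnn // (leq_ltn_trans _ (ltn_ord k)).
move: (odd_card_tail_count T kE) T_even; rewrite tail_count_last //=.
by move=> ->; case: (odd _); case: (k \in T).
Qed.

End CycleCuts.

Section CyclePolytope.
Variables (R : realType) (n : nat).

Lemma cut_polytope_cycle_sub : @cut_polytope R n n (@cycle_ends n) `<=` parity_region 1 0.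
Proof.
move=> x [lam [lam0 _ lam1 xE]].
have -> : x = fun k => \sum_S lam S * vertex R (cycle_cut S) k.
  by apply/funext => k; rewrite xE; under eq_bigr do rewrite cut_vector_cycle.
have cube := unit_cube_convex lam0 lam1 (fun S => vertex_in_unit_cube R (cycle_cut S)).
split => // [v v_odd|v _]; last exact: vertex_dist_ge0.
rewrite vertex_dist_affine // -lam1; apply: ler_sum => S _.
rewrite -{1}(mulr1 (lam S)) ler_wpM2l //.
have := vertex_dist_odd_even (vertex_in_unit_cube R (cycle_cut S)) v_odd (cycle_cut_even S).
by rewrite vertex_distxx addr0.
Qed.

Lemma parity_region_sub_cut_polytope_cycle : (0 < n)%N ->
  parity_region 1 0 `<=` @cut_polytope R n n (@cycle_ends n).
Proof.
move=> n_gt0 x; rewrite -{1}(subr0 1) => x_region.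
have p01 : 0 <= (0 : R) <= 1 by rewrite lexx ler01.
have [lam [lam_dist lam_marg lam_odd]] := parity_region_coupling p01 x_region.
have [lam0 lam1] := lam_dist.
exists (fun S => \sum_(T | cut_shore T == S) lam T); split.
- by move=> S; apply: sumr_ge0.
- move=> S S_last; apply: big1 => T /eqP S_shore; exfalso.
  have last_lt : (n.-1 < n)%N by rewrite ltn_predL.
  by have := S_last (Ordinal last_lt) erefl; rewrite -S_shore (negbTE (cut_shore_last _ _)).
- by rewrite -lam1 [RHS](partition_big (@cut_shore n) predT).
- move=> k; rewrite -lam_marg /marginal (partition_big (@cut_shore n) predT) //=.
  apply: eq_bigr => S _; rewrite mulr_suml; apply: eq_bigr => T /eqP <-.
  have [T_odd|T_even] := boolP (odd #|T|).
    by rewrite (odd_mass_eq0 lam_dist lam_odd T_odd) !mul0r.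
  by rewrite cut_vector_cycle cycle_cut_shore.
Qed.

Lemma cut_polytope_cycle : (0 < n)%N -> @cut_polytope R n n (@cycle_ends n) = parity_region 1 0.
Proof.
move=> n_gt0; apply/seteqP; split; first exact: cut_polytope_cycle_sub.
exact: parity_region_sub_cut_polytope_cycle.
Qed.

End CyclePolytope.

Section PositivePart.
Variable R : realType.
Implicit Types (u a e x : R).

Lemma is_derive0_caratheodory (f g : R -> R) :
  (forall h, f h = h * g h) -> {for 0, continuous g} -> is_derive (0 : R) 1 f (g 0).
Proof.
move=> fE g0; have quotE : (fun h : R => h^-1 *: ((f \o shift 0) (h *: 1) - f 0)) @ 0^' --> g 0.
  apply: (@cvg_trans _ (g @ 0^')); last exact: cvg_within_filter.
  apply: near_eq_cvg; near=> h.
  have h0 : h != 0 by near: h; exact: nbhs_dnbhs_neq.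
  by rewrite /= addr0 [h *: 1]mulr1 !fE mul0r subr0 [_ *: _]mulKf.
by apply: DeriveDef; [exact: cvgP quotE|exact: cvg_lim quotE].
Unshelve. all: by end_near.
Qed.

Definition pos_part u : R := Num.max u 0.

Lemma pos_part_id u : 0 <= u -> pos_part u = u.
Proof. by move=> u0; rewrite /pos_part max_l. Qed.

Lemma pos_part_le0 u : u <= 0 -> pos_part u = 0.
Proof. by move=> u0; rewrite /pos_part max_r. Qed.

Lemma continuous_pos_part : continuous pos_part.
Proof. by move=> x; apply: continuous_max => //; exact: cvg_cst. Qed.

Lemma is_derive_pos_part_exp k u :
  is_derive u 1 (fun y => pos_part y ^+ k.+2) (k.+2%:R * pos_part u ^+ k.+1).
Proof.
have [u_lt0|u_gt0|->] := ltrgtP u 0.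
- rewrite pos_part_le0 ?ltW // expr0n mulr0.
  apply: near_eq_is_derive (is_derive_cst 0 u 1); near=> y.
  by rewrite pos_part_le0 ?expr0n // ltW //; near: y; exact: lt_nbhsl.
- have dX : is_derive u 1 (@id R ^+ k.+2) (k.+2%:R * u ^+ k.+1).
    exact: is_derive_eq (is_deriveX k.+2 (is_derive_id u 1)) (mulr1 _).
  rewrite pos_part_id ?ltW //; apply: near_eq_is_derive dX; near=> y.
  by rewrite exprfctE pos_part_id ?ltW //; near: y; exact: lt_nbhsr.
- have -> : k.+2%:R * pos_part 0 ^+ k.+1 = pos_part 0 ^+ k.+1.
    by rewrite pos_part_id // !expr0n mulr0.
  apply: (is_derive0_caratheodory (g := fun h => pos_part h ^+ k.+1)) => [h|].
    have [h_le0|h_gt0] := leP h 0; first by rewrite pos_part_le0 // !expr0n mulr0.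
    by rewrite exprS pos_part_id // ltW.
  by apply: (@continuous_comp _ _ _ pos_part (fun u => u ^+ k.+1));
    [exact: continuous_pos_part|exact: exprn_continuous].
Unshelve. all: by end_near.
Qed.

Lemma is_derive_affine a e x : is_derive x 1 (fun y => a + e * y) e.
Proof.
apply: is_derive_eq (is_deriveD (is_derive_cst a x 1) (is_deriveZ e (is_derive_id x 1))) _.
by rewrite add0r [_ *: _]mulr1.
Qed.

Lemma is_derive_pos_part_affine_exp k a e x :
  is_derive x 1 (fun y => pos_part (a + e * y) ^+ k.+2)
    (k.+2%:R * pos_part (a + e * x) ^+ k.+1 * e).
Proof.
exact: (@is_derive1_comp _ (fun y => pos_part y ^+ k.+2) _ x _ _
  (is_derive_pos_part_exp k (a + e * x)) (is_derive_affine a e x)).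
Qed.

Lemma continuous_pos_part_affine_exp k a e :
  continuous (fun y => pos_part (a + e * y) ^+ k).
Proof.
move=> x; apply: (@continuous_comp _ _ _ (fun y => a + e * y) (fun u => pos_part u ^+ k)).
  apply/differentiable_continuous/derivable1_diffP.
  by have [] := is_derive_affine a e x.
by apply: (@continuous_comp _ _ _ pos_part (fun u => u ^+ k));
  [exact: continuous_pos_part|exact: exprn_continuous].
Qed.

Lemma pos_part_max_exp n a b : a + b <= 0 ->
  pos_part (Num.max a b) ^+ n.+1 = pos_part a ^+ n.+1 + pos_part b ^+ n.+1.
Proof.
move=> ab_le0; have [a_le0|a_gt0] := leP a 0; have [b_le0|b_gt0] := leP b 0.
- by rewrite !pos_part_le0 ?ge_max ?a_le0 ?b_le0 // expr0n addr0.
- by rewrite max_r ?(pos_part_le0 a_le0) ?expr0n ?add0r //; lra.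
- by rewrite max_l ?(pos_part_le0 b_le0) ?expr0n ?addr0 //; lra.
- lra.
Qed.

End PositivePart.

Section Volume.
Variable R : realType.
Local Notation mu := (@lebesgue_measure R).
Implicit Types (a r s x : R).

Lemma lebesgue_volS m (A : set ('I_m.+1 -> R)) :
  lebesgue_vol A = (\int[mu]_(x in [set: R]) lebesgue_vol [set y | A (vcons x y)])%E.
Proof. by []. Qed.

Lemma lebesgue_vol_empty m (A : set ('I_m -> R)) : (forall y, ~ A y) -> lebesgue_vol A = 0%E.
Proof.
elim: m A => [|m IH] A A0 /=; first by rewrite asboolF // => -[y /A0].
by under eq_integral => x _ do rewrite (IH _ (fun y => A0 _)); exact: integral0.
Qed.

Lemma integral_itv_antiderivative (g G : R -> R) (a b : R) : a < b ->
  continuous g -> (forall x, is_derive x 1 G (g x)) ->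
  (\int[mu]_(x in `[a, b]) (g x)%:E = (G b - G a)%:E)%E.
Proof.
move=> ab g_cont G'; rewrite (@continuous_FTC2 _ g G) ?EFinB //.
- exact: continuous_subspaceT.
- have G_cont : continuous G.
    by move=> x; have [G_der _] := G' x; exact/differentiable_continuous/derivable1_diffP.
  by split=> [x _||]; [have [] := G' x|apply: cvg_within_filter; exact: G_cont..].
- by move=> x _; rewrite derive1E; have [_ ->] := G' x.
Qed.

Definition region_vol k r s : R :=
  1 - 2 ^+ k.-1 / k`!%:R * (pos_part r ^+ k + pos_part s ^+ k).

Definition region_vol_formula k := forall r s, r <= 1 -> s <= 1 -> r + s <= 1 ->
  lebesgue_vol (parity_region (m := k) r s) = (region_vol k r s)%:E.

Lemma region_vol_formula1 : region_vol_formula 1.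
Proof.
move=> r s r1 s1 rs1 /=.
pose a := Num.max s 0; pose b := Num.min (1 - r) 1.
have ab : a <= b by rewrite ge_max !le_min; apply/andP; split; apply/andP; split; lra.
have slice x : (exists y : 'I_0 -> R, parity_region r s (vcons x y)) <-> a <= x <= b.
  rewrite /a /b ge_max le_min; split.
    case=> y /parity_region_vcons [/andP[x0 x1] /parity_region0].
    by rewrite ge_max => /andP[? ?]; apply/andP; split; apply/andP; split; lra.
  case/andP=> /andP[? ?] /andP[? ?]; exists (fun _ => 0).
  apply/parity_region_vcons; split; first by apply/andP; split; lra.
  by apply/parity_region0; rewrite ge_max; apply/andP; split; lra.
transitivity (\int[mu]_(x in [set: R]) (\1_([set` `[a, b]]) x)%:E)%E.
  apply: eq_integral => x _; rewrite /indic.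
  case: (pselect (exists y : 'I_0 -> R, parity_region r s (vcons x y))) => x_in.
    by rewrite asboolT // mem_set //= in_itv /=; apply/slice.
  by rewrite asboolF // memNset //= in_itv /= => /slice.
rewrite integral_indic //= setIT lebesgue_measure_itv /=.
have -> : region_vol 1 r s = b - a.
  rewrite /region_vol /= expr0 factE divr1 mul1r !expr1 /a /b /pos_part.
  by have [?|?] := leP r 0; have [?|?] := leP s 0; have [?|?] := leP (1 - r) 1; lra.
case: ifPn => // ba; have -> : a = b by apply/eqP; rewrite eq_le ab leNgt.
by rewrite subrr.
Qed.

Definition slice_defect k a x : R := pos_part (a - x) ^+ k + pos_part (a - 1 + x) ^+ k.

Definition slice_defect_primitive k a x : R := pos_part (a - 1 + x) ^+ k - pos_part (a - x) ^+ k.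

Lemma continuous_slice_defect k a : continuous (slice_defect k a).
Proof.
have -> : slice_defect k a =
    (fun y => pos_part (a + -1 * y) ^+ k) + (fun y => pos_part (a - 1 + 1 * y) ^+ k).
  by rewrite addrfctE; apply/funext => y; rewrite /slice_defect mulN1r mul1r.
by move=> x; apply: continuousD; exact: continuous_pos_part_affine_exp.
Qed.

Lemma is_derive_slice_defect_primitive k a x :
  is_derive x 1 (slice_defect_primitive k.+2 a) (k.+2%:R * slice_defect k.+1 a x).
Proof.
have dH := is_deriveB (is_derive_pos_part_affine_exp k (a - 1) 1 x)
                      (is_derive_pos_part_affine_exp k a (-1) x).
apply: near_eq_is_derive (is_derive_eq dH _).
  by near=> y; rewrite opprfctE addrfctE /= mul1r mulN1r.
by rewrite /slice_defect mul1r mulN1r; ring.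
Unshelve. all: by end_near.
Qed.

Lemma integral_slice_volume k r s : r <= 1 -> s <= 1 ->
  (\int[mu]_(x in `[0%R, 1%R])
     (1 - 2 ^+ k / k.+1`!%:R * (slice_defect k.+1 r x + slice_defect k.+1 s x))%:E)%E =
  (region_vol k.+2 r s)%:E.
Proof.
move=> r1 s1; set c : R := 2 ^+ k / k.+1`!%:R.
pose G x := x - c / k.+2%:R * (slice_defect_primitive k.+2 r x + slice_defect_primitive k.+2 s x).
have k2_neq0 : k.+2%:R != 0 :> R by rewrite pnatr_eq0.
have dG x : is_derive x 1 G (1 - c * (slice_defect k.+1 r x + slice_defect k.+1 s x)).
  have dGfun := is_deriveB (is_derive_id x 1) (is_deriveZ (c / k.+2%:R)
    (is_deriveD (is_derive_slice_defect_primitive k r x)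
                (is_derive_slice_defect_primitive k s x))).
  apply: near_eq_is_derive (is_derive_eq dGfun _); first by near=> y; rewrite !fctE.
  by rewrite -[(c / _) *: _]/(c / _ * _); field.
rewrite (integral_itv_antiderivative ltr01 _ dG); last first.
  have -> : (fun x => 1 - c * (slice_defect k.+1 r x + slice_defect k.+1 s x)) =
      cst 1 - c \*: (slice_defect k.+1 r + slice_defect k.+1 s) by rewrite !fctE.
  move=> x; apply: continuousB; first exact: cvg_cst.
  by apply: continuousZl_tmp; apply: continuousD; exact: continuous_slice_defect.
congr EFin; rewrite /G /slice_defect_primitive /region_vol !subrK !addr0 !subr0.
rewrite !(@pos_part_le0 _ (_ - 1)) ?subr_le0 // expr0n /= factS natrM [2 ^+ k.+1]exprS /c.
by field; rewrite pnatr_eq0 -lt0n fact_gt0 -natrD pnatr_eq0.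
Unshelve. all: by end_near.
Qed.

Lemma lebesgue_vol_slice_parity_region k r s x : region_vol_formula k.+1 ->
  r <= 1 -> s <= 1 -> r + s <= 1 -> 0 <= x <= 1 ->
  lebesgue_vol [set y : 'I_k.+1 -> R | parity_region r s (vcons x y)] =
  (1 - 2 ^+ k / k.+1`!%:R * (slice_defect k.+1 r x + slice_defect k.+1 s x))%:E.
Proof.
move=> IH r1 s1 rs1 /andP[x0 x1].
have -> : [set y : 'I_k.+1 -> R | parity_region r s (vcons x y)] =
    parity_region (Num.max (r - x) (s - 1 + x)) (Num.max (s - x) (r - 1 + x)).
  apply/seteqP; split => y /=; first by case/parity_region_vcons.
  by move=> y_in; apply/parity_region_vcons; rewrite x0 x1.
rewrite IH ?ge_max; first last.
- by have [?|?] := leP (r - x) (s - 1 + x); have [?|?] := leP (s - x) (r - 1 + x); lra.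
- by apply/andP; split; lra.
- by apply/andP; split; lra.
by congr EFin; rewrite /region_vol /slice_defect !pos_part_max_exp /=; lra.
Qed.

Lemma region_vol_formula_succ k : region_vol_formula k.+1 -> region_vol_formula k.+2.
Proof.
move=> IH r s r1 s1 rs1; rewrite lebesgue_volS -integral_slice_volume //.
rewrite [RHS]integral_mkcond; apply: eq_integral => x _; rewrite patchE.
case: ifPn => [|x01]; first by rewrite inE /= in_itv /=; exact: lebesgue_vol_slice_parity_region.
rewrite lebesgue_vol_empty // => y /parity_region_vcons [x01' _].
by apply: (negP x01); rewrite inE /= in_itv.
Qed.

End Volume.

Theorem lebesgue_vol_parity_region (R : realType) k : region_vol_formula R k.+1.
Proof. by elim: k => [|k IH]; [exact: region_vol_formula1|exact: region_vol_formula_succ]. Qed.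

Unset Implicit Arguments.
Theorem proposition5 (R : realType) (n : nat) (hn : (3 <= n)%N) :
  @cut_vol R n n (@cycle_ends n) = (1 - 2 ^+ n.-1 / (n`!)%:R : R)%:E.
Proof.
case: n hn => [//|k] _.
rewrite /cut_vol cut_polytope_cycle // lebesgue_vol_parity_region ?ler01 ?addr0 //.
by rewrite /region_vol pos_part_id ?ler01 // pos_part_le0 // expr1n expr0n addr0 mulr1.
Qed.
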